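(* Assume the Setting and Constants below and that $(L_g,L_c)$ satisfies $(S_n)$. Then the equation $$F\circ\begin{pmatrix}\mathrm{Id}+k_c\\ k_u\\ k_s\end{pmatrix}=\begin{pmatrix}\mathrm{Id}+k_c\\ k_u\\ k_s\end{pmatrix}\circ(A_c+r),$$ i.e. $F(x+k_c(x)+k_u(x)+k_s(x))=y+k_c(y)+k_u(y)+k_s(y)$ with $y=A_cx+r(x)$ for all $x\in X_c$, has a unique solution $(r,k_u,k_s)$ among all $k_u\in C^0_b(X_c,X_u)$, $k_s\in C^0_b(X_c,X_s)$ and $r\in C^0_b(X_c,X_c)$ such that $A_c+r$ is a homeomorphism of $X_c$.
   Context: Notation. $C^k_b(Y,Z)$ is the Banach space of $C^k$ maps $f:Y\to Z$ between Banach spaces with $\|f\|_k:=\max_{0\le j\le k}\sup_y\|D^jf(y)\|<\infty$; $C^0_b$ consists of bounded continuous maps. Setting. Let $n\ge2$ be an integer and $X$ a Banach space with $X=X_c\oplus X_u\oplus X_s$ for closed subspaces, whose norm satisfies $\|x\|=\max\{\|x_c\|,\|x_u\|,\|x_s\|\}$. Let $A$ be a bounded linear operator on $X$ leaving $X_c,X_u,X_s$ invariant, with restrictions $A_c,A_u,A_s$; $A_c,A_u$ invertible, and $\|A_c^{-1}\|^{\tilde n}\|A_s\|<1$, $\|A_u^{-1}\|\|A_c\|^{\tilde n}<1$ for $1\le\tilde n\le n$. Let $L_g,L_c\ge0$, $F=A+g$ with $g\in C^n_b(X,X)$, $g(0)=0$, $Dg(0)=0$, $\|Dg\|_0\le L_g$,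 and $k_c\in C^n_b(X_c,X_c)$ with $k_c(0)=0$, $Dk_c(0)=0$, $\|Dk_c\|_0\le L_c$. Constants. $L_r:=\frac{L_g+L_c(2\|A_c\|+L_g)}{1-L_c}$, $L_t:=\frac{\|A_c^{-1}\|^2L_r}{1-\|A_c^{-1}\|L_r}$, $L_u:=\frac{\|A_u^{-1}\|(1+L_c)L_g}{1-L_r\|A_u^{-1}\|-\|A_c\|\|A_u^{-1}\|}$, $L_s:=\frac{\|A_c^{-1}\|(1+L_c)L_g}{1-L_r\|A_c^{-1}\|-\|A_s\|\|A_c^{-1}\|}$, $L_{-1}:=\|A_c^{-1}\|+L_t$; $\theta_{\tilde n,1}:=L_g+L_c$, $\theta_{\tilde n,2}:=\|A_u^{-1}\|((\|A_c\|+L_r)^{\tilde n}+L_g+L_u)$, $\theta_{\tilde n,3}:=L_{-1}^{\tilde n}(\|A_s\|(1+L_{-1}L_s)+L_g(1+L_{-1}(1+L_c)))$. $(S_N)$ means: $L_c<1$, $L_r\|A_c^{-1}\|<1$, $L_r\|A_u^{-1}\|+\|A_c\|\|A_u^{-1}\|<1$, $L_r\|A_c^{-1}\|+\|A_s\|\|A_c^{-1}\|<1$, and $\theta_{\tilde n,i}<1$ for $i=1,2,3$, $0\le\tilde n\le N$. *)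

From HB Require Import structures.
From mathcomp Require Import all_boot all_order all_algebra.
From mathcomp Require Import all_classical all_reals all_analysis.
Set Implicit Arguments. Unset Strict Implicit. Unset Printing Implicit Defensive.
Import Order.TTheory GRing.Theory Num.Theory.
Import numFieldNormedType.Exports.
Local Open Scope classical_set_scope.
Local Open Scope ring_scope.

Section Defs.
Variable R : realType.

Definition opnorm (U V : normedModType R) (f : U -> V) : R :=
  inf [set M : R | 0 <= M /\ forall x, `|f x| <= M * `|x|].

Definition prodnorm (U : normedModType R) (hs : seq U) : R :=
  \prod_(h <- hs) `|h|.

Definition multilinear (U V : normedModType R) (j : nat) (T : seq U -> V) :=
  forall hs : seq U, size hs = j -> forall i, (i < j)%N ->
  forall (a : R) (u v : U),
    T (set_nth 0 hs i (a *: u + v)) =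
    a *: T (set_nth 0 hs i u) + T (set_nth 0 hs i v).

(* [Ckb_family k f D]: D j y [h_1;...;h_j] = D^j f(y)[h_1,...,h_j] for j <= k,
   and these are the Frechet derivatives of f, continuous in the multilinear
   operator norm, with  ||f||_k = max_{j<=k} sup_y ||D^j f(y)|| < oo.
   Thus  f \in C^k_b(Y,Z)  iff  exists D, Ckb_family k f D  (and D is then
   unique on lists of the right length). *)
Definition Ckb_family (Y Z : normedModType R) (k : nat) (f : Y -> Z)
    (D : nat -> Y -> seq Y -> Z) : Prop :=
  [/\ (forall y, D 0%N y [::] = f y),
      (forall j, (j <= k)%N -> forall y, multilinear j (D j y)),
      (forall j, (j < k)%N -> forall y (e : R), 0 < e ->
         exists2 d : R, 0 < d & forall h : Y, `|h| < d ->
           forall hs, size hs = j ->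
             `|D j (y + h) hs - D j y hs - D j.+1 y (h :: hs)|
               <= e * `|h| * prodnorm hs),
      (forall j, (j <= k)%N -> forall y (e : R), 0 < e ->
         exists2 d : R, 0 < d & forall y' : Y, `|y' - y| < d ->
           forall hs, size hs = j ->
             `|D j y' hs - D j y hs| <= e * prodnorm hs) &
      (exists M : R, forall j, (j <= k)%N -> forall y hs, size hs = j ->
         `|D j y hs| <= M * prodnorm hs)].

Definition bounded_continuous (Y Z : normedModType R) (f : Y -> Z) : Prop :=
  continuous f /\ exists M : R, forall y, `|f y| <= M.

Definition homeomorphism (Y : normedModType R) (h : Y -> Y) : Prop :=
  continuous h /\ exists2 h' : Y -> Y, cancel h h' /\ cancel h' h & continuous h'.

(* Constants; a = ||A_c||, ai = ||A_c^{-1}||, ui = ||A_u^{-1}||, s = ||A_s||. *)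
Definition cL_r (a Lg Lc : R) : R := (Lg + Lc * (2 * a + Lg)) / (1 - Lc).
Definition cL_t (a ai Lg Lc : R) : R :=
  ai ^+ 2 * cL_r a Lg Lc / (1 - ai * cL_r a Lg Lc).
Definition cL_u (a ui Lg Lc : R) : R :=
  ui * (1 + Lc) * Lg / (1 - cL_r a Lg Lc * ui - a * ui).
Definition cL_s (a ai s Lg Lc : R) : R :=
  ai * (1 + Lc) * Lg / (1 - cL_r a Lg Lc * ai - s * ai).
Definition cL_m1 (a ai Lg Lc : R) : R := ai + cL_t a ai Lg Lc.
Definition theta1 (m : nat) (Lg Lc : R) : R := Lg + Lc.
Definition theta2 (m : nat) (a ui Lg Lc : R) : R :=
  ui * ((a + cL_r a Lg Lc) ^+ m + Lg + cL_u a ui Lg Lc).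
Definition theta3 (m : nat) (a ai s Lg Lc : R) : R :=
  cL_m1 a ai Lg Lc ^+ m *
   (s * (1 + cL_m1 a ai Lg Lc * cL_s a ai s Lg Lc)
    + Lg * (1 + cL_m1 a ai Lg Lc * (1 + Lc))).

Definition cond_S (N : nat) (a ai ui s Lg Lc : R) : Prop :=
  [/\ Lc < 1,
      cL_r a Lg Lc * ai < 1,
      cL_r a Lg Lc * ui + a * ui < 1,
      cL_r a Lg Lc * ai + s * ai < 1 &
      forall m, (m <= N)%N ->
        [/\ theta1 m Lg Lc < 1, theta2 m a ui Lg Lc < 1 &
            theta3 m a ai s Lg Lc < 1]].

End Defs.

From HB Require Import structures.
From mathcomp Require Import all_boot all_order all_algebra.
From mathcomp Require Import all_classical all_reals all_analysis.
From mathcomp Require Import ring lra.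
Import Order.TTheory GRing.Theory Num.Theory.
Import numFieldNormedType.Exports.
Local Open Scope classical_set_scope.
Local Open Scope ring_scope.

(* Write f = (k_u, k_s) and p_f x = (x + k_c x, f x) for the point of the
   graph over x.  Since k_c is a contraction, Id + k_c is invertible, so the
   X_c-component of the invariance equation determines y = Phi_f x; then
   r = Phi_f - A_c is L_r-Lipschitz and Phi_f is a homeomorphism whose inverse
   is L_{-1}-Lipschitz.  The X_u- and X_s-components say that f is a fixed point
   of the graph transform
     T f x = (A_u^-1 (k_u (Phi_f x) - g_u (p_f x)),
              A_s k_s (Phi_f^-1 x) + g_s (p_f (Phi_f^-1 x))),
   which maps the bounded pairs with L_u- and L_s-Lipschitz components into
   themselves and contracts the sup distance there by the factor
   max(theta_{0,2}, theta_{0,3}) < 1.  Banach's theorem gives a solution.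
   Any other bounded continuous solution satisfies the same two equations,
   without being known to be Lipschitz; the same estimates, with Lipschitz
   bounds used only on the fixed point, show that its distance to the fixed
   point shrinks by that factor, hence vanishes. *)

Set Implicit Arguments. Unset Strict Implicit. Unset Printing Implicit Defensive.

Section real_bounds.
Context {R : realType}.

Lemma ler_geometric_slack (x y c q : R) : 0 <= q < 1 ->
  (forall k, x <= y + c * q ^+ k) -> x <= y.
Proof.
move=> /andP[q0 q1] le_x.
have cvg_y : (fun k => y + c * q ^+ k) @ \oo --> y.
  rewrite -[X in _ --> X]addr0 -(mulr0 c).
  apply: cvgD; first exact: cvg_cst.
  by apply: cvgM; [exact: cvg_cst | apply: cvg_expr; rewrite ger0_norm].
rewrite -(cvg_lim _ cvg_y) //; apply: limr_ge; first by apply/cvg_ex; exists y.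
exact: nearW.
Qed.

Lemma ler_eps_scaled (x y c : R) : 0 <= c ->
  (forall e, 0 < e -> x <= y + c * e) -> x <= y.
Proof.
move=> c0 le_xy; apply/ler_addgt0Pr => e e0.
have c1 : 0 < c + 1 by lra.
apply: le_trans (le_xy _ (divr_gt0 e0 c1)) _.
rewrite lerD2l mulrA ler_pdivrMr //; nra.
Qed.

End real_bounds.

Section normed_facts.
Context {R : realType} {U V : normedModType R}.

Lemma normr_fst_le (x : U * V) : `|x.1| <= `|x|.
Proof. by rewrite prod_normE le_max lexx. Qed.

Lemma normr_snd_le (x : U * V) : `|x.2| <= `|x|.
Proof. by rewrite prod_normE le_max lexx orbT. Qed.

Lemma normr_pair_le (x : U * V) (c : R) :
  `|x.1| <= c -> `|x.2| <= c -> `|x| <= c.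
Proof. by move=> x1 x2; rewrite prod_normE ge_max x1 x2. Qed.

Lemma ler_dist_add (x y x' y' : V) :
  `|x + y - (x' + y')| <= `|x - x'| + `|y - y'|.
Proof. by rewrite opprD addrACA; exact: ler_normD. Qed.

Lemma ler_dist_sub (x y x' y' : V) :
  `|x - y - (x' - y')| <= `|x - x'| + `|y - y'|.
Proof.
by apply: le_trans (ler_dist_add x (- y) x' (- y')) _; rewrite -opprD normrN.
Qed.

Lemma ler_dist_addB (x y z x' y' z' : V) :
  `|x + y - z - (x' + y' - z')| <= `|x - x'| + `|y - y'| + `|z - z'|.
Proof. by apply: le_trans (ler_dist_sub _ _ _ _) _; rewrite lerD2r ler_dist_add. Qed.

Lemma lipschitz_continuous (f : U -> V) (L : R) : 0 <= L ->
  (forall x y, `|f x - f y| <= L * `|x - y|) -> continuous f.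
Proof.
move=> L0 f_lip x; apply/cvgrPdist_lt => e e0.
have L1 : 0 < L + 1 by lra.
apply/nbhs_normP; exists (e / (L + 1)); first by rewrite /= divr_gt0.
move=> z /= xz; apply: le_lt_trans (f_lip x z) _.
have : `|x - z| * (L + 1) < e by rewrite -ltr_pdivlMr.
have := normr_ge0 (x - z); nra.
Qed.

Lemma lipschitz_geometric_limit (fs : nat -> U -> V) (f : U -> V) (L C q : R) :
  0 <= q < 1 -> (forall k x y, `|fs k x - fs k y| <= L * `|x - y|) ->
  (forall k x, `|f x - fs k x| <= C * q ^+ k) ->
  forall x y, `|f x - f y| <= L * `|x - y|.
Proof.
move=> q01 fs_lip f_fs x y; apply: (@ler_geometric_slack _ _ _ (2 * C) _ q01) => k.
have fy := f_fs k y; rewrite distrC in fy.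
have := ler_distD (fs k x) (f x) (f y); have := ler_distD (fs k y) (fs k x) (f y).
have := f_fs k x; have := fs_lip k x y; lra.
Qed.

End normed_facts.

Section geometric_limits.
Context {R : realType}.

Lemma geometric_increments_dist (V : normedModType R) (u : nat -> V) (B q : R) :
  0 <= q < 1 -> (forall k, `|u k.+1 - u k| <= B * q ^+ k) ->
  forall n m, `|u n - u (n + m)%N| <= B / (1 - q) * q ^+ n.
Proof.
move=> /andP[q0 q1] du n m.
have q1' : 0 < 1 - q by rewrite subr_gt0.
have B0 : 0 <= B by have := le_trans (normr_ge0 _) (du 0%N); rewrite expr0 mulr1.
suff : `|u n - u (n + m)%N| <= B / (1 - q) * q ^+ n * (1 - q ^+ m).
  move/le_trans; apply; rewrite ler_piMr ?lerBlDr ?lerDl ?exprn_ge0 //.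
  by rewrite mulr_ge0 ?exprn_ge0 ?divr_ge0 // ltW.
elim: m => [|m IH]; first by rewrite addn0 subrr normr0 expr0 subrr mulr0.
rewrite addnS (le_trans (ler_distD (u (n + m)%N) _ _)) //.
apply: le_trans (lerD IH _) _; first by rewrite distrC; exact: du.
rewrite exprD exprS le_eqVlt; apply/orP; left; apply/eqP.
by field; rewrite gt_eqF.
Qed.

(* Unlike [completeNormedModType], this form of completeness is inherited by
   products (see [geometrically_complete_prod]). *)
Definition geometrically_complete (V : normedModType R) :=
  forall (u : nat -> V) (B q : R), 0 <= q < 1 ->
  (forall k, `|u k.+1 - u k| <= B * q ^+ k) ->
  exists l, forall k, `|l - u k| <= B / (1 - q) * q ^+ k.

Lemma complete_geometrically_complete (V : completeNormedModType R) :
  geometrically_complete V.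
Proof.
move=> u B q q01 du; have /andP[q0 q1] := q01.
have B0 : 0 <= B by have := le_trans (normr_ge0 _) (du 0%N); rewrite expr0 mulr1.
have cvg_u : cvgn u.
  have -> : u = (fun n => u 0%N + series (telescope u) n).
    by apply: funext => n; exact: eq_sum_telescope.
  apply: is_cvgD; first exact: is_cvg_cst.
  apply: normed_cvg; apply: (@series_le_cvg _ _ (geometric B q)) => [k|k|k|].
  - exact: normr_ge0.
  - by rewrite /geometric mulr_ge0 ?exprn_ge0.
  - exact: du.
  - by apply/cvg_ex; eexists; apply: cvg_geometric_series; rewrite ger0_norm.
exists (limn u) => k.
have cvg_dist : (fun m => `|u m - u k|) @ \oo --> `|limn u - u k|.
  by apply: cvg_norm; apply: cvgB => //; exact: cvg_cst.
rewrite -(cvg_lim _ cvg_dist) //; apply: limr_le.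
  by apply/cvg_ex; eexists; exact: cvg_dist.
near=> m; rewrite distrC.
have -> : m = (k + (m - k))%N by rewrite subnKC //; near: m; exists k.
exact: geometric_increments_dist.
Unshelve. all: end_near. Qed.

Lemma geometrically_complete_prod (U W : normedModType R) :
  geometrically_complete U -> geometrically_complete W ->
  geometrically_complete (U * W)%type.
Proof.
move=> cU cW u B q q01 du.
have [l1 ul1] := cU (fun k => (u k).1) B q q01
  (fun k => le_trans (normr_fst_le (u k.+1 - u k)) (du k)).
have [l2 ul2] := cW (fun k => (u k).2) B q q01
  (fun k => le_trans (normr_snd_le (u k.+1 - u k)) (du k)).
by exists (l1, l2) => k; apply: normr_pair_le; [exact: ul1 | exact: ul2].
Qed.

Lemma sup_contraction_fixpoint (A : Type) (V : normedModType R)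
    (K : (A -> V) -> Prop) (T : (A -> V) -> A -> V) (q B0 : R) (f0 : A -> V) :
  geometrically_complete V -> 0 <= q < 1 -> 0 <= B0 ->
  K f0 -> (forall a, `|T f0 a - f0 a| <= B0) ->
  (forall f, K f -> K (T f)) ->
  (forall f f' B, K f -> K f' -> 0 <= B -> (forall a, `|f a - f' a| <= B) ->
     forall a, `|T f a - T f' a| <= q * B) ->
  (forall (fs : nat -> A -> V) f C, (forall k, K (fs k)) ->
     (forall k a, `|f a - fs k a| <= C * q ^+ k) -> K f) ->
  exists2 f, K f & T f = f.
Proof.
move=> completeV q01 B00 Kf0 Tf0 KT T_contr K_closed; have /andP[q0 q1] := q01.
pose fs k := iter k T f0.
have Kfs k : K (fs k) by elim: k => [|k IH] //=; exact: KT.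
have dfs k a : `|fs k.+1 a - fs k a| <= B0 * q ^+ k.
  elim: k a => [|k IH] a; first by rewrite expr0 mulr1; exact: Tf0.
  rewrite exprS mulrCA; apply: (T_contr (fs k.+1) (fs k)) => //.
  exact: mulr_ge0 B00 (exprn_ge0 _ q0).
have /choice [f fsE] : forall a, exists l : V,
    forall k, `|l - fs k a| <= B0 / (1 - q) * q ^+ k.
  by move=> a; apply: (completeV (fs ^~ a)).
have C0 : 0 <= B0 / (1 - q) by rewrite divr_ge0 // subr_ge0 ltW.
have Kf : K f by exact: (K_closed fs f (B0 / (1 - q))).
exists f => //; apply: funext => a; apply/eqP; rewrite -subr_eq0 -normr_le0.
apply: (@ler_geometric_slack _ _ 0 (2 * (B0 / (1 - q)) * q) q q01) => k.
have Tk := T_contr f (fs k) _ Kf (Kfs k) (mulr_ge0 C0 (exprn_ge0 k q0)) (fsE ^~ k) a.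
apply: le_trans (ler_distD (fs k.+1 a) _ _) _; rewrite add0r (distrC _ (f a)).
have := fsE a k.+1; rewrite exprS => fk1.
lra.
Qed.

Lemma contraction_fixpoint (V : completeNormedModType R) (h : V -> V) (k : R) :
  0 <= k < 1 -> (forall x y, `|h x - h y| <= k * `|x - y|) -> exists z, h z = z.
Proof.
move=> /andP[k0 k1] h_lip.
have [|||z _ zE] := @banach_fixed_point R V setT (totalfun_ setT h).
- by exists (NngNum k0); split => // -[x y] _; exact: h_lip.
- exact: closedT.
- by exists 0.
by exists z.
Qed.

End geometric_limits.

Section perturbed_identity.
Context {R : realType} {V : completeNormedModType R} (k : V -> V) (L : R).
Hypotheses (L01 : 0 <= L < 1) (k_lip : forall x y, `|k x - k y| <= L * `|x - y|).

Lemma dist_id_add_ge z z' : (1 - L) * `|z - z'| <= `|z + k z - (z' + k z')|.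
Proof.
have dE : z - z' = z + k z - (z' + k z') - (k z - k z').
  by rewrite opprD addrACA addrK.
have := ler_normB (z + k z - (z' + k z')) (k z - k z'); rewrite -dE.
have := k_lip z z'; lra.
Qed.

Lemma id_add_surj w : exists z, z + k z = w.
Proof.
have [|z zE] := @contraction_fixpoint R V (fun z => w - k z) L L01.
  by move=> x y; rewrite [w - k x]addrC addrKA opprK addrC distrC; exact: k_lip.
by exists z; rewrite -{1}zE subrK.
Qed.

Definition inv_id_add (w : V) : V := xget 0 [set z | z + k z = w].

Lemma inv_id_addK w : inv_id_add w + k (inv_id_add w) = w.
Proof. exact: (xgetPex 0 (id_add_surj w)). Qed.

Lemma inv_id_add_uniq z w : z + k z = w -> z = inv_id_add w.
Proof.
move=> zE; have := dist_id_add_ge z (inv_id_add w).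
rewrite zE inv_id_addK subrr normr0 => le0.
have /andP[_ L1] := L01.
apply/eqP; rewrite -subr_eq0 -normr_le0 -(pmulr_rle0 _ (_ : 0 < 1 - L)) //.
by rewrite subr_gt0.
Qed.

End perturbed_identity.

Section local_lipschitz.
Context {R : realType} {W : normedModType R}.

Lemma lipschitz01_of_local (phi : R -> W) (M : R) : 0 <= M ->
  (forall t e, 0 < e -> exists2 d, 0 < d & forall tau, `|tau| < d ->
     `|phi (t + tau) - phi t| <= (M + e) * `|tau|) ->
  `|phi 1 - phi 0| <= M.
Proof.
move=> M0 phi_loc; apply: (@ler_eps_scaled _ _ _ 1 ler01) => e e0.
(* Continuous induction: the supremum of the good set is attained, and it
   cannot be below 1. *)
pose S := [set t : R | 0 <= t <= 1 /\ `|phi t - phi 0| <= (M + e) * t].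
have S0 : S 0 by split; [rewrite lexx ler01 | rewrite subrr normr0 mulr0].
have supS : has_sup S by split; [exists 0 | exists 1 => t [/andP[_ ?] _]].
set s := sup S.
have s0 : 0 <= s by exact: sup_upper_bound supS _ S0.
have s1 : s <= 1 by apply: ge_sup; [exists 0 | move=> t [/andP[_ ?] _]].
have Ss : `|phi s - phi 0| <= (M + e) * s.
  have [d d0 phi_s] := phi_loc s 1 ltr01.
  apply: (@ler_eps_scaled _ _ _ (M + 1)) => [|eps eps0]; first lra.
  have eta0 : 0 < Num.min eps d by rewrite lt_min eps0 d0.
  have [t St lt_t] := sup_adherent eta0 supS; rewrite -/s in lt_t.
  have ts : t <= s by exact: sup_upper_bound supS _ St.
  have [/andP[t0 _] St'] := St.
  have [le_eps le_d] : Num.min eps d <= eps /\ Num.min eps d <= d.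
    by split; rewrite ge_min lexx ?orbT.
  have near_t : `|t - s| < d by rewrite distrC ger0_norm ?subr_ge0 //; lra.
  have := phi_s _ near_t.
  rewrite subrKC (distrC t) ger0_norm ?subr_ge0 // distrC => d_phi.
  have le_ts : (M + e) * t <= (M + e) * s by rewrite ler_wpM2l //; lra.
  have le_st : (M + 1) * (s - t) <= (M + 1) * eps by rewrite ler_wpM2l //; lra.
  by have := ler_distD (phi t) (phi s) (phi 0); lra.
have s_eq1 : s = 1.
  apply/eqP; rewrite eq_le s1 /= leNgt; apply/negP => s_lt1.
  have [d d0 phi_s] := phi_loc s e e0.
  pose tau := Num.min (1 - s) (d / 2).
  have tau0 : 0 < tau by rewrite lt_min subr_gt0 s_lt1 divr_gt0.
  have [tau1 tau2] : tau <= 1 - s /\ tau <= d / 2 by split; rewrite ge_min lexx ?orbT.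
  have tau_d : `|tau| < d by rewrite gtr0_norm //; lra.
  have : S (s + tau).
    split; first by apply/andP; split; lra.
    have := phi_s _ tau_d; rewrite gtr0_norm // => d_phi.
    have := ler_distD (phi s) (phi (s + tau)) (phi 0).
    rewrite mulrDr; lra.
  by move=> /(sup_upper_bound supS); rewrite -/s; lra.
by move: Ss; rewrite s_eq1 mulr1 mul1r.
Qed.

Lemma lipschitz_of_local {U : normedModType R} (f : U -> W) (L : R) : 0 <= L ->
  (forall y e, 0 < e -> exists2 d, 0 < d & forall h, `|h| < d ->
     `|f (y + h) - f y| <= (L + e) * `|h|) ->
  forall x y, `|f x - f y| <= L * `|x - y|.
Proof.
move=> L0 f_loc x y; set v := x - y.
have v1 : 0 < `|v| + 1 by have := normr_ge0 v; lra.
pose phi t := f (y + t *: v).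
have -> : f x = phi 1 by rewrite /phi scale1r subrKC.
have -> : f y = phi 0 by rewrite /phi scale0r addr0.
apply: lipschitz01_of_local; first exact: mulr_ge0 L0 (normr_ge0 v).
move=> t e e0.
have [d d0 f_t] := f_loc (y + t *: v) (e / (`|v| + 1)) (divr_gt0 e0 v1).
exists (d / (`|v| + 1)); first exact: divr_gt0.
move=> tau tau_d.
have tau_v : `|tau *: v| < d.
  rewrite normrZ; move: tau_d; rewrite ltr_pdivlMr //.
  by have := normr_ge0 tau; nra.
have slack : e / (`|v| + 1) * `|v| <= e.
  by rewrite mulrAC ler_pdivrMr //; nra.
have := f_t _ tau_v; rewrite /phi scalerDl addrA normrZ => /le_trans; apply.
have := normr_ge0 tau; nra.
Qed.

End local_lipschitz.

Section Ckb.
Context {R : realType} {Y Z : normedModType R}.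

Lemma Ckb_lipschitz (k : nat) (f : Y -> Z) D (L : R) :
  (0 < k)%N -> 0 <= L -> Ckb_family k f D ->
  (forall y h, `|D 1%N y [:: h]| <= L * `|h|) ->
  forall x y, `|f x - f y| <= L * `|x - y|.
Proof.
move=> k_gt0 L0 [D0 _ D_diff _ _] D1_le; apply: lipschitz_of_local => // y e e0.
have [d d0 f_y] := D_diff 0%N k_gt0 y e e0.
exists d => // h hd; have := f_y h hd [::] erefl.
rewrite !D0 /prodnorm big_nil mulr1 mulrDl => le_rem.
rewrite -[f (y + h) - f y](subrK (D 1%N y [:: h])).
apply: le_trans (ler_normD _ _) _; have := D1_le y h; lra.
Qed.

Lemma Ckb_bounded (k : nat) (f : Y -> Z) D :
  Ckb_family k f D -> exists M, forall y, `|f y| <= M.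
Proof.
move=> [D0 _ _ _ [M D_le]]; exists M => y.
by have := D_le 0%N (leq0n _) y [::] erefl; rewrite D0 /prodnorm big_nil mulr1.
Qed.

End Ckb.

Section opnorm.
Context {R : realType} {U V : normedModType R} (f : {linear U -> V}).
Hypothesis f_cont : continuous (f : U -> V).

Let bounds_neq0 : [set M : R | 0 <= M /\ forall x, `|f x| <= M * `|x|] !=set0.
Proof.
have /linear_boundedP [M [_ f_le]] := @continuous_linear_bounded R U V 0 f (@f_cont 0).
exists (Num.max M 0 + 1); split; first by rewrite addr_ge0 // le_max lexx orbT.
by apply: f_le; rewrite ltr_pwDr ?ltr01 // le_max lexx.
Qed.

Lemma opnorm_ge0 : 0 <= opnorm (f : U -> V).
Proof. by apply: lb_le_inf => [|M []]; first exact: bounds_neq0. Qed.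

Lemma opnorm_le x : `|f x| <= opnorm (f : U -> V) * `|x|.
Proof.
have [->|x0] := eqVneq x 0; first by rewrite linear0 !normr0 mulr0.
have x_gt0 : 0 < `|x| by rewrite normr_gt0.
rewrite -ler_pdivrMr //; apply: lb_le_inf; first exact: bounds_neq0.
by move=> M [_ f_le]; rewrite ler_pdivrMr.
Qed.

End opnorm.

Section invariant_graph.
Variables (R : realType) (Xc Xu Xs : completeNormedModType R).
Variables (Ac Aci : {linear Xc -> Xc}) (Au Aui : {linear Xu -> Xu}).
Variables (As : {linear Xs -> Xs}).
Variables (g : Xc * Xu * Xs -> Xc * Xu * Xs) (kc : Xc -> Xc).
Variables (a ai ui s Lg Lc Mg Mk : R).
Hypotheses (AcK : cancel Ac Aci) (AciK : cancel Aci Ac).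
Hypotheses (AuK : cancel Au Aui) (AuiK : cancel Aui Au).
Hypotheses (a_ge0 : 0 <= a) (ai_ge0 : 0 <= ai) (ui_ge0 : 0 <= ui) (s_ge0 : 0 <= s).
Hypotheses (Ac_le : forall x, `|Ac x| <= a * `|x|).
Hypotheses (Aci_le : forall x, `|Aci x| <= ai * `|x|).
Hypotheses (Aui_le : forall x, `|Aui x| <= ui * `|x|).
Hypotheses (As_le : forall x, `|As x| <= s * `|x|).
Hypotheses (Lg_ge0 : 0 <= Lg) (Lc_ge0 : 0 <= Lc).
Hypotheses (g_lip : forall p p', `|g p - g p'| <= Lg * `|p - p'|).
Hypotheses (g_le : forall p, `|g p| <= Mg).
Hypotheses (kc_lip : forall x y, `|kc x - kc y| <= Lc * `|x - y|).
Hypotheses (kc_le : forall x, `|kc x| <= Mk).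
Hypothesis HS : cond_S 1 a ai ui s Lg Lc.

Local Notation Lr := (cL_r a Lg Lc).
Local Notation Lu := (cL_u a ui Lg Lc).
Local Notation Ls := (cL_s a ai s Lg Lc).
Local Notation Lm1 := (cL_m1 a ai Lg Lc).
(* [th2], [th3] are theta_{0,2}, theta_{0,3}; only (S_1) is used. *)
Local Notation th2 := (ui * (1 + Lg + Lu)).
Local Notation th3 := (s * (1 + Lm1 * Ls) + Lg * (1 + Lm1 * (1 + Lc))).
Local Notation q := (Num.max th2 th3).

Let Lc_lt1 : Lc < 1. Proof. by case: HS. Qed.
Let Lr_ai : Lr * ai < 1. Proof. by case: HS. Qed.
Let Lr_ui : Lr * ui + a * ui < 1. Proof. by case: HS. Qed.
Let Lr_s : Lr * ai + s * ai < 1. Proof. by case: HS. Qed.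
Let Lg_Lc : Lg + Lc < 1. Proof. by case: HS => _ _ _ _ /(_ 0%N isT) []. Qed.
Let th2_lt1 : th2 < 1. Proof. by case: HS => _ _ _ _ /(_ 0%N isT) []. Qed.
Let th3_lt1 : th3 < 1.
Proof. by case: HS => _ _ _ _ /(_ 0%N isT) [_ _]; rewrite /theta3 expr0 mul1r. Qed.
Let th2_1 : ui * (a + Lr + Lg + Lu) < 1.
Proof. by case: HS => _ _ _ _ /(_ 1%N isT) []. Qed.
Let th3_1 : Lm1 * th3 < 1.
Proof. by case: HS => _ _ _ _ /(_ 1%N isT) []. Qed.

Let Lc01 : 0 <= Lc < 1. Proof. by rewrite Lc_ge0 Lc_lt1. Qed.
Let Lr_ge0 : 0 <= Lr.
Proof.
apply: divr_ge0; last by rewrite subr_ge0 ltW.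
by rewrite addr_ge0 ?mulr_ge0 ?addr_ge0 ?mulr_ge0.
Qed.
Let ai_Lr : 0 < 1 - ai * Lr. Proof. by rewrite subr_gt0 mulrC. Qed.
Let Lu_den : 0 < 1 - Lr * ui - a * ui. Proof. by move: Lr_ui; lra. Qed.
Let Ls_den : 0 < 1 - Lr * ai - s * ai. Proof. by move: Lr_s; lra. Qed.
Let Lm1E : Lm1 = ai / (1 - ai * Lr).
Proof.
rewrite /cL_m1 /cL_t; move: ai_Lr; move: (ai) (Lr) => x y xy.
by field; rewrite gt_eqF.
Qed.
Let Lu_ge0 : 0 <= Lu.
Proof. by apply: divr_ge0; [rewrite !mulr_ge0 ?addr_ge0 | exact: ltW]. Qed.
Let Ls_ge0 : 0 <= Ls.
Proof. by apply: divr_ge0; [rewrite !mulr_ge0 ?addr_ge0 | exact: ltW]. Qed.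
Let Lm1_ge0 : 0 <= Lm1. Proof. by rewrite Lm1E divr_ge0 // ltW. Qed.
Let q01 : 0 <= q < 1.
Proof.
have th2_ge0 : 0 <= th2 by apply: mulr_ge0 => //; rewrite !addr_ge0.
by rewrite gt_max th2_lt1 th3_lt1 le_max th2_ge0.
Qed.

(* [Lu] and [Ls] reproduce themselves under the graph transform, see
   [graph_transform_admissible]. *)
Let Lu_fix : ui * (Lu * (a + Lr) + Lg * (1 + Lc)) = Lu.
Proof.
rewrite /cL_u; move: Lu_den; move: (ui) (Lr) (a) Lg Lc => x y z u v h.
by field; rewrite gt_eqF.
Qed.
Let Ls_fix : Lm1 * (s * Ls + Lg * (1 + Lc)) = Ls.
Proof.
rewrite Lm1E /cL_s; move: ai_Lr Ls_den; move: (ai) (Lr) (s) Lg Lc => x y z u v h h'.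
by field; rewrite !gt_eqF.
Qed.
Let Lu_le : Lu <= 1 + Lc.
Proof.
have uiLg : ui * Lg <= 1 - Lr * ui - a * ui.
  by move: th2_1 (mulr_ge0 ui_ge0 Lu_ge0); lra.
rewrite -(ler_pM2r Lu_den) /cL_u divfK ?gt_eqF // -mulrA mulrC -mulrA.
by rewrite ler_wpM2l ?addr_ge0 // mulrC.
Qed.
Let Ls_le : Ls <= 1 + Lc.
Proof.
have Lm1_sLg : Lm1 * (s + Lg) < 1.
  apply: le_lt_trans th3_1; rewrite ler_wpM2l //.
  have := mulr_ge0 s_ge0 (mulr_ge0 Lm1_ge0 Ls_ge0).
  by have := mulr_ge0 Lg_ge0 (mulr_ge0 Lm1_ge0 (addr_ge0 ler01 Lc_ge0)); lra.
have aiLg : ai * Lg <= 1 - Lr * ai - s * ai.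
  by move: Lm1_sLg; rewrite Lm1E mulrAC ltr_pdivrMr // mul1r; lra.
rewrite -(ler_pM2r Ls_den) /cL_s divfK ?gt_eqF // -mulrA mulrC -mulrA.
by rewrite ler_wpM2l ?addr_ge0 // mulrC.
Qed.

Let gc_lip p p' : `|(g p).1.1 - (g p').1.1| <= Lg * `|p - p'|.
Proof.
exact: le_trans (le_trans (normr_fst_le (g p - g p').1) (normr_fst_le _)) (g_lip p p').
Qed.
Let gu_lip p p' : `|(g p).1.2 - (g p').1.2| <= Lg * `|p - p'|.
Proof.
exact: le_trans (le_trans (normr_snd_le (g p - g p').1) (normr_fst_le _)) (g_lip p p').
Qed.
Let gs_lip p p' : `|(g p).2 - (g p').2| <= Lg * `|p - p'|.
Proof. exact: le_trans (normr_snd_le (g p - g p')) (g_lip p p'). Qed.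
Let gc_le p : `|(g p).1.1| <= Mg.
Proof. exact: le_trans (le_trans (normr_fst_le _) (normr_fst_le _)) (g_le p). Qed.
Let gu_le p : `|(g p).1.2| <= Mg.
Proof. exact: le_trans (le_trans (normr_snd_le _) (normr_fst_le _)) (g_le p). Qed.
Let gs_le p : `|(g p).2| <= Mg.
Proof. exact: le_trans (normr_snd_le _) (g_le p). Qed.

Definition graph_pt (f : Xc -> Xu * Xs) (x : Xc) : Xc * Xu * Xs :=
  (x + kc x, (f x).1, (f x).2).

Definition admissible (f : Xc -> Xu * Xs) : Prop :=
  [/\ forall x y, `|(f x).1 - (f y).1| <= Lu * `|x - y|,
      forall x y, `|(f x).2 - (f y).2| <= Ls * `|x - y| &
      exists M, forall x, `|f x| <= M].

Lemma graph_pt_lip f x y : admissible f ->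
  `|graph_pt f x - graph_pt f y| <= (1 + Lc) * `|x - y|.
Proof.
case=> f1_lip f2_lip _; have xy_ge0 := normr_ge0 (x - y).
apply: normr_pair_le; first apply: normr_pair_le => /=.
- by apply: le_trans (ler_dist_add _ _ _ _) _; have := kc_lip x y; lra.
- by apply: le_trans (f1_lip x y) _; rewrite ler_wpM2r.
- by apply: le_trans (f2_lip x y) _; rewrite ler_wpM2r.
Qed.

Lemma graph_pt_dist f f' B x : 0 <= B -> (forall y, `|f y - f' y| <= B) ->
  `|graph_pt f x - graph_pt f' x| <= B.
Proof.
move=> B_ge0 ff'; apply: normr_pair_le; first apply: normr_pair_le => /=.
- by rewrite subrr normr0.
- exact: le_trans (normr_fst_le _) (ff' x).
- exact: le_trans (normr_snd_le _) (ff' x).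
Qed.

(* The center dynamics [x |-> y] of the invariance equation: its first
   component reads [y + kc y = Ac (x + kc x) + gc (graph_pt f x)]. *)
Definition center_map f x : Xc :=
  inv_id_add kc (Ac (x + kc x) + (g (graph_pt f x)).1.1).

Definition center_shift f x : Xc := center_map f x - Ac x.

Lemma center_mapE f x :
  center_map f x + kc (center_map f x) = Ac (x + kc x) + (g (graph_pt f x)).1.1.
Proof. exact: (inv_id_addK Lc01 kc_lip). Qed.

Lemma center_map_shift f x : center_map f x = Ac x + center_shift f x.
Proof. by rewrite subrKC. Qed.

Lemma center_shiftE f x :
  center_shift f x = Ac (kc x) + (g (graph_pt f x)).1.1 - kc (center_map f x).
Proof.
apply: (addIr (kc (center_map f x))); rewrite subrK addrAC center_mapE linearD.
by rewrite addrC -addrA addKr.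
Qed.

Lemma center_shift_lip f x y : admissible f ->
  `|center_shift f x - center_shift f y| <= Lr * `|x - y|.
Proof.
move=> adm_f; set d := `|x - y|; set dr := `|_ - _|.
have d_map : `|center_map f x - center_map f y| <= a * d + dr.
  rewrite !center_map_shift; apply: le_trans (ler_dist_add _ _ _ _) _.
  by rewrite lerD2r -linearB Ac_le.
have dr_le : dr <= a * (Lc * d) + Lg * ((1 + Lc) * d) + Lc * (a * d + dr).
  rewrite {1}/dr !center_shiftE; apply: le_trans (ler_dist_addB _ _ _ _ _ _) _.
  apply: lerD; first apply: lerD.
  - by rewrite -linearB (le_trans (Ac_le _)) // ler_wpM2l.
  - by apply: le_trans (gc_lip _ _) _; rewrite ler_wpM2l // graph_pt_lip.
  - by apply: le_trans (kc_lip _ _) _; rewrite ler_wpM2l.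
rewrite /cL_r mulrAC ler_pdivlMr ?subr_gt0 //.
by move: dr_le Lc_lt1; lra.
Qed.

Lemma center_map_lip f x y : admissible f ->
  `|center_map f x - center_map f y| <= (a + Lr) * `|x - y|.
Proof.
move=> adm_f; rewrite !center_map_shift mulrDl.
apply: le_trans (ler_dist_add _ _ _ _) _.
by rewrite lerD // ?center_shift_lip // -linearB Ac_le.
Qed.

Lemma center_map_surj f z : admissible f -> exists x, center_map f x = z.
Proof.
move=> adm_f.
have [||x xE] :=
  @contraction_fixpoint _ _ (fun x => Aci (z - center_shift f x)) (ai * Lr).
- by rewrite mulr_ge0 //= mulrC.
- move=> x y; rewrite -linearB; apply: le_trans (Aci_le _) _.
  rewrite -mulrA ler_wpM2l // [z - _]addrC addrKA opprK addrC distrC.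
  exact: center_shift_lip.
- by exists x; rewrite center_map_shift -{1}xE AciK subrK.
Qed.

Lemma center_map_expansive f x y : admissible f ->
  `|x - y| <= Lm1 * `|center_map f x - center_map f y|.
Proof.
move=> adm_f.
have dAc : `|Ac x - Ac y| <= `|center_map f x - center_map f y| + Lr * `|x - y|.
  have AcE z : Ac z = center_map f z - center_shift f z by rewrite opprB subrKC.
  rewrite !AcE; apply: le_trans (ler_dist_sub _ _ _ _) _.
  by rewrite lerD2l center_shift_lip.
have := Aci_le (Ac x - Ac y); rewrite linearB /= !AcK => dxy.
rewrite Lm1E mulrAC ler_pdivlMr //.
by move: dxy (ler_wpM2l ai_ge0 dAc); lra.
Qed.

Definition center_map_inv f z : Xc := xget 0 [set x | center_map f x = z].

Lemma center_map_invK f z : admissible f -> center_map f (center_map_inv f z) = z.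
Proof. by move=> adm_f; exact: (xgetPex 0 (center_map_surj z adm_f)). Qed.

Lemma center_mapK f x : admissible f -> center_map_inv f (center_map f x) = x.
Proof.
move=> adm_f; apply/eqP; rewrite -subr_eq0 -normr_le0.
apply: le_trans (center_map_expansive _ _ adm_f) _.
by rewrite center_map_invK // subrr normr0 mulr0.
Qed.

Lemma center_map_inv_lip f z z' : admissible f ->
  `|center_map_inv f z - center_map_inv f z'| <= Lm1 * `|z - z'|.
Proof.
move=> adm_f; apply: le_trans (center_map_expansive _ _ adm_f) _.
by rewrite !center_map_invK.
Qed.

Lemma center_map_dist f f' B x : 0 <= B -> (forall y, `|f y - f' y| <= B) ->
  `|center_map f x - center_map f' x| <= B.
Proof.
move=> B_ge0 ff'.
have := dist_id_add_ge kc_lip (center_map f x) (center_map f' x).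
rewrite !center_mapE [Ac (x + kc x) + _]addrC addrKA => d_le.
rewrite -(@ler_pM2l _ (1 - Lc)) ?subr_gt0 //; apply: le_trans d_le _.
apply: le_trans (gc_lip _ _) _.
apply: le_trans (ler_wpM2l Lg_ge0 (graph_pt_dist x B_ge0 ff')) _.
by rewrite ler_wpM2r //; move: Lg_Lc; lra.
Qed.

Lemma unstable_step_dist f f' B x :
  admissible f -> 0 <= B -> (forall y, `|f y - f' y| <= B) ->
  `|Aui ((f (center_map f x)).1 - (g (graph_pt f x)).1.2)
    - Aui ((f' (center_map f' x)).1 - (g (graph_pt f' x)).1.2)| <= th2 * B.
Proof.
case=> f1_lip _ _ B_ge0 ff'.
rewrite -linearB; apply: le_trans (Aui_le _) _; rewrite -mulrA ler_wpM2l //.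
apply: le_trans (ler_dist_sub _ _ _ _) _.
have d1 : `|(f (center_map f x)).1 - (f' (center_map f' x)).1| <= Lu * B + B.
  apply: le_trans (ler_distD (f (center_map f' x)).1 _ _) _; apply: lerD.
  - by apply: le_trans (f1_lip _ _) _; rewrite ler_wpM2l // center_map_dist.
  - exact: le_trans (normr_fst_le _) (ff' _).
have d2 : `|(g (graph_pt f x)).1.2 - (g (graph_pt f' x)).1.2| <= Lg * B.
  by apply: le_trans (gu_lip _ _) _; rewrite ler_wpM2l // graph_pt_dist.
by move: d1 d2; lra.
Qed.

Lemma stable_step_dist f f' B x x' :
  admissible f -> 0 <= B -> (forall y, `|f y - f' y| <= B) ->
  center_map f x = center_map f' x' ->
  `|As (f x).2 + (g (graph_pt f x)).2 - (As (f' x').2 + (g (graph_pt f' x')).2)|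
    <= th3 * B.
Proof.
move=> adm_f B_ge0 ff' xx'; have [_ f2_lip _] := adm_f.
have dx : `|x - x'| <= Lm1 * B.
  apply: le_trans (center_map_expansive _ _ adm_f) _.
  by rewrite ler_wpM2l // xx' distrC center_map_dist.
have dx_ge0 := normr_ge0 (x - x').
have d1 : `|(f x).2 - (f' x').2| <= Ls * (Lm1 * B) + B.
  apply: le_trans (ler_distD (f x').2 _ _) _; apply: lerD.
  - by apply: le_trans (f2_lip _ _) _; rewrite ler_wpM2l.
  - exact: le_trans (normr_snd_le _) (ff' _).
have d2 : `|graph_pt f x - graph_pt f' x'| <= (1 + Lc) * (Lm1 * B) + B.
  apply: le_trans (ler_distD (graph_pt f x') _ _) _.
  apply: lerD; last exact: graph_pt_dist.
  by apply: le_trans (graph_pt_lip _ _ adm_f) _; rewrite ler_wpM2l ?addr_ge0.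
have dA : `|As (f x).2 - As (f' x').2| <= s * (Ls * (Lm1 * B) + B).
  by rewrite -linearB (le_trans (As_le _)) // ler_wpM2l.
have dG := le_trans (gs_lip _ _) (ler_wpM2l Lg_ge0 d2).
by apply: le_trans (ler_dist_add _ _ _ _) _; move: dA dG; lra.
Qed.

(* The [Xu]- and [Xs]-components of the invariance equation, solved for
   [ku x] and for [ks y] with [y = center_map f x]. *)
Definition graph_transform f x : Xu * Xs :=
  (Aui ((f (center_map f x)).1 - (g (graph_pt f x)).1.2),
   As (f (center_map_inv f x)).2 + (g (graph_pt f (center_map_inv f x))).2).

Lemma graph_transform_contract f f' B : admissible f -> admissible f' -> 0 <= B ->
  (forall y, `|f y - f' y| <= B) ->
  forall x, `|graph_transform f x - graph_transform f' x| <= q * B.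
Proof.
move=> adm_f adm_f' B_ge0 ff' x; apply: normr_pair_le => /=.
- apply: le_trans (unstable_step_dist x adm_f B_ge0 ff') _.
  by rewrite ler_wpM2r // le_max lexx.
- have xx' : center_map f (center_map_inv f x) = center_map f' (center_map_inv f' x).
    by rewrite !center_map_invK.
  apply: le_trans (stable_step_dist adm_f B_ge0 ff' xx') _.
  by rewrite ler_wpM2r // le_max lexx orbT.
Qed.

Lemma graph_transform_admissible f : admissible f -> admissible (graph_transform f).
Proof.
move=> adm_f; have [f1_lip f2_lip [M f_le]] := adm_f.
have M_ge0 : 0 <= M := le_trans (normr_ge0 _) (f_le 0).
have Mg_ge0 : 0 <= Mg := le_trans (normr_ge0 _) (g_le 0).
split => /=.
- move=> x y; rewrite -linearB; apply: le_trans (Aui_le _) _.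
  rewrite -[in X in _ <= X * _]Lu_fix -mulrA ler_wpM2l //.
  apply: le_trans (ler_dist_sub _ _ _ _) _.
  have := le_trans (f1_lip _ _) (ler_wpM2l Lu_ge0 (center_map_lip x y adm_f)).
  have := le_trans (gu_lip _ _) (ler_wpM2l Lg_ge0 (graph_pt_lip x y adm_f)).
  lra.
- move=> z z'; apply: le_trans (ler_dist_add _ _ _ _) _; rewrite -Ls_fix.
  set x := center_map_inv f z; set x' := center_map_inv f z'.
  have dA : `|As (f x).2 - As (f x').2| <= s * (Ls * `|x - x'|).
    by rewrite -linearB (le_trans (As_le _)) // ler_wpM2l.
  have dG : `|(g (graph_pt f x)).2 - (g (graph_pt f x')).2|
      <= Lg * ((1 + Lc) * `|x - x'|).
    by apply: le_trans (gs_lip _ _) _; rewrite ler_wpM2l // graph_pt_lip.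
  have c_ge0 : 0 <= s * Ls + Lg * (1 + Lc) :=
    addr_ge0 (mulr_ge0 s_ge0 Ls_ge0) (mulr_ge0 Lg_ge0 (addr_ge0 ler01 Lc_ge0)).
  have := ler_wpM2l c_ge0 (center_map_inv_lip z z' adm_f).
  by move: dA dG; lra.
- exists (ui * (M + Mg) + (s * M + Mg)) => x.
  have u_ge0 : 0 <= ui * (M + Mg) := mulr_ge0 ui_ge0 (addr_ge0 M_ge0 Mg_ge0).
  have s_M_ge0 : 0 <= s * M + Mg := addr_ge0 (mulr_ge0 s_ge0 M_ge0) Mg_ge0.
  apply: normr_pair_le => /=.
  + apply: le_trans (Aui_le _) _.
    have dx : `|(f (center_map f x)).1 - (g (graph_pt f x)).1.2| <= M + Mg.
      apply: le_trans (ler_normB _ _) _; apply: lerD; last exact: gu_le.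
      exact: le_trans (normr_fst_le _) (f_le _).
    by move: (ler_wpM2l ui_ge0 dx) s_M_ge0; lra.
  + apply: le_trans (ler_normD _ _) _.
    have dA : `|As (f (center_map_inv f x)).2| <= s * M.
      by rewrite (le_trans (As_le _)) // ler_wpM2l // (le_trans (normr_snd_le _)).
    by move: dA (gs_le (graph_pt f (center_map_inv f x))) u_ge0; lra.
Qed.

Lemma admissible_closed (fs : nat -> Xc -> Xu * Xs) f C :
  (forall k, admissible (fs k)) -> (forall k x, `|f x - fs k x| <= C * q ^+ k) ->
  admissible f.
Proof.
move=> adm_fs f_fs; split.
- apply: (@lipschitz_geometric_limit _ _ _ (fun k x => (fs k x).1) _ _ C _ q01).
  + by move=> k; case: (adm_fs k).
  + by move=> k x; exact: le_trans (normr_fst_le _) (f_fs k x).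
- apply: (@lipschitz_geometric_limit _ _ _ (fun k x => (fs k x).2) _ _ C _ q01).
  + by move=> k; case: (adm_fs k).
  + by move=> k x; exact: le_trans (normr_snd_le _) (f_fs k x).
- have [_ _ [M f0_le]] := adm_fs 0%N.
  exists (M + C) => x; have := f_fs 0%N x; rewrite expr0 mulr1.
  by have := ler_distD (fs 0%N x) (f x) 0; rewrite !subr0; move: (f0_le x); lra.
Qed.

Lemma graph_transform_fixpoint : exists2 f, admissible f & graph_transform f = f.
Proof.
have Mg_ge0 : 0 <= Mg := le_trans (normr_ge0 _) (g_le 0).
apply: (@sup_contraction_fixpoint _ _ _ admissible graph_transform q
  (ui * Mg + Mg) (fun=> 0)).
- exact: geometrically_complete_prod (@complete_geometrically_complete _ Xu)
    (@complete_geometrically_complete _ Xs).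
- exact: q01.
- exact: addr_ge0 (mulr_ge0 ui_ge0 Mg_ge0) Mg_ge0.
- split=> [x y|x y|]; rewrite ?subrr ?normr0.
  + exact: mulr_ge0 Lu_ge0 (normr_ge0 _).
  + exact: mulr_ge0 Ls_ge0 (normr_ge0 _).
  + by exists 0.
- move=> x; rewrite subr0; apply: normr_pair_le => /=.
  + apply: le_trans (Aui_le _) _; rewrite sub0r normrN.
    by move: (ler_wpM2l ui_ge0 (gu_le (graph_pt (fun=> 0) x))) Mg_ge0; lra.
  + rewrite linear0 add0r.
    move: (gs_le (graph_pt (fun=> 0) (center_map_inv (fun=> 0) x))).
    by move: (mulr_ge0 ui_ge0 Mg_ge0); lra.
- exact: graph_transform_admissible.
- exact: graph_transform_contract.
- exact: admissible_closed.
Qed.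

Definition F_map (p : Xc * Xu * Xs) : Xc * Xu * Xs :=
  (Ac p.1.1, Au p.1.2, As p.2) + g p.

Definition invariant_graph (r : Xc -> Xc) (ku : Xc -> Xu) (ks : Xc -> Xs) : Prop :=
  [/\ bounded_continuous ku, bounded_continuous ks, bounded_continuous r,
      homeomorphism (fun x => Ac x + r x) &
      forall x : Xc, let y := Ac x + r x in
        F_map (x + kc x, ku x, ks x) = (y + kc y, ku y, ks y)].

Lemma fixpoint_invariant_graph f : admissible f -> graph_transform f = f ->
  invariant_graph (center_shift f) (fun x => (f x).1) (fun x => (f x).2).
Proof.
move=> adm_f Tf; have [f1_lip f2_lip [M f_le]] := adm_f.
have fu x : (f x).1 = Aui ((f (center_map f x)).1 - (g (graph_pt f x)).1.2).
  by rewrite -{1}Tf.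
have fs x : (f x).2 =
    As (f (center_map_inv f x)).2 + (g (graph_pt f (center_map_inv f x))).2.
  by rewrite -{1}Tf.
split.
- split; first exact: lipschitz_continuous Lu_ge0 f1_lip.
  by exists M => x; exact: le_trans (normr_fst_le _) (f_le x).
- split; first exact: lipschitz_continuous Ls_ge0 f2_lip.
  by exists M => x; exact: le_trans (normr_snd_le _) (f_le x).
- split.
    exact: lipschitz_continuous Lr_ge0 (fun x y => center_shift_lip x y adm_f).
  exists (a * Mk + Mg + Mk) => x; rewrite center_shiftE.
  apply: le_trans (ler_normB _ _) _; rewrite lerD // (le_trans (ler_normD _ _)) //.
  by rewrite lerD // (le_trans (Ac_le _)) // ler_wpM2l.
- have -> : (fun x => Ac x + center_shift f x) = center_map f.
    by apply: funext => x; rewrite -center_map_shift.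
  split; first exact: lipschitz_continuous (addr_ge0 a_ge0 Lr_ge0)
    (fun x y => center_map_lip x y adm_f).
  exists (center_map_inv f).
    by split=> z; [exact: center_mapK | exact: center_map_invK].
  exact: lipschitz_continuous Lm1_ge0 (fun x y => center_map_inv_lip x y adm_f).
- move=> x /=; rewrite -center_map_shift /F_map /=.
  have fu' : (f (center_map f x)).1 = Au (f x).1 + (g (graph_pt f x)).1.2.
    by rewrite (fu x) AuiK subrK.
  have fs' : (f (center_map f x)).2 = As (f x).2 + (g (graph_pt f x)).2.
    by rewrite fs center_mapK.
  rewrite center_mapE fu' fs' /graph_pt /=.
  by case: (g _) => [[g1 g2] g3].
Qed.

Lemma invariant_graph_center_map r ku ks : invariant_graph r ku ks ->
  forall x, Ac x + r x = center_map (fun x => (ku x, ks x)) x.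
Proof.
case=> _ _ _ _ r_eq x; apply: (inv_id_add_uniq Lc01 kc_lip).
by have := congr1 (fun p => p.1.1) (r_eq x); rewrite /F_map /= => <-.
Qed.

(* [f'] need not be admissible: Lipschitz bounds are only used on [f]. *)
Lemma graph_transform_eqs_dist f f' B : admissible f -> graph_transform f = f ->
  (forall x, (f' x).1 = Aui ((f' (center_map f' x)).1 - (g (graph_pt f' x)).1.2)) ->
  (forall z, exists2 x', center_map f' x' = z &
     (f' z).2 = As (f' x').2 + (g (graph_pt f' x')).2) ->
  0 <= B -> (forall x, `|f x - f' x| <= B) ->
  forall x, `|f x - f' x| <= q * B.
Proof.
move=> adm_f Tf f'u f's B_ge0 ff' x; rewrite -{1}Tf; apply: normr_pair_le => /=.
- rewrite f'u; apply: le_trans (unstable_step_dist x adm_f B_ge0 ff') _.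
  by rewrite ler_wpM2r // le_max lexx.
- have [x' x'E ->] := f's x.
  have xx' : center_map f (center_map_inv f x) = center_map f' x'.
    by rewrite center_map_invK.
  apply: le_trans (stable_step_dist adm_f B_ge0 ff' xx') _.
  by rewrite ler_wpM2r // le_max lexx orbT.
Qed.

Lemma invariant_graph_unique f r ku ks : admissible f -> graph_transform f = f ->
  invariant_graph r ku ks ->
  [/\ r = center_shift f, ku = (fun x => (f x).1) & ks = (fun x => (f x).2)].
Proof.
move=> adm_f Tf inv_r.
have [[_ [Mu ku_le]] [_ [Ms ks_le]] _ [_ [h' [_ h'K] _]] r_eq] := inv_r.
have [_ _ [M f_le]] := adm_f.
pose f' x := (ku x, ks x).
have center_r := invariant_graph_center_map inv_r.
have f'u x : (f' x).1 = Aui ((f' (center_map f' x)).1 - (g (graph_pt f' x)).1.2).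
  have := congr1 (fun p => p.1.2) (r_eq x); rewrite /F_map /= center_r => <-.
  by rewrite addrK AuK.
have surj z : center_map f' (h' z) = z by rewrite -center_r h'K.
have f's z : exists2 x', center_map f' x' = z &
    (f' z).2 = As (f' x').2 + (g (graph_pt f' x')).2.
  exists (h' z) => //.
  by have := congr1 (fun p => p.2) (r_eq (h' z)); rewrite /F_map /= center_r surj => <-.
have M_ge0 : 0 <= M := le_trans (normr_ge0 _) (f_le 0).
have Mu_ge0 : 0 <= Mu := le_trans (normr_ge0 _) (ku_le 0).
have Ms_ge0 : 0 <= Ms := le_trans (normr_ge0 _) (ks_le 0).
have /andP[q_ge0 _] := q01.
have dist k x : `|f x - f' x| <= (M + (Mu + Ms)) * q ^+ k.
  elim: k x => [|k IH] x.
    rewrite expr0 mulr1; apply: le_trans (ler_normB _ _) _; rewrite lerD //.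
    by apply: normr_pair_le => /=; [move: (ku_le x) | move: (ks_le x)]; lra.
  rewrite exprS mulrCA; apply: (graph_transform_eqs_dist adm_f Tf f'u f's) => //.
  by rewrite mulr_ge0 ?exprn_ge0 // !addr_ge0.
have ff' : f' = f.
  apply: funext => x; apply/eqP; rewrite eq_sym -subr_eq0 -normr_le0.
  apply: (@ler_geometric_slack _ _ 0 (M + (Mu + Ms)) q q01) => k.
  by rewrite add0r; exact: dist.
split; apply: funext => x.
- by rewrite /center_shift -ff' -center_r addrC addKr.
- by rewrite -ff'.
- by rewrite -ff'.
Qed.

Lemma invariant_graph_exists_unique :
  exists r ku ks, invariant_graph r ku ks /\
    forall r' ku' ks', invariant_graph r' ku' ks' -> [/\ r' = r, ku' = ku & ks' = ks].
Proof.
have [f adm_f Tf] := graph_transform_fixpoint.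
exists (center_shift f), (fun x => (f x).1), (fun x => (f x).2).
split; first exact: fixpoint_invariant_graph.
by move=> r' ku' ks'; exact: invariant_graph_unique.
Qed.

End invariant_graph.

Lemma cond_S_leq (R : realType) (m n : nat) (a ai ui s Lg Lc : R) :
  (m <= n)%N -> cond_S n a ai ui s Lg Lc -> cond_S m a ai ui s Lg Lc.
Proof.
move=> mn [? ? ? ? theta_lt1]; split=> // k km.
exact: theta_lt1 (leq_trans km mn).
Qed.

Unset Implicit Arguments.

Theorem lemma6p2 (R : realType) (n : nat)
  (Xc Xu Xs : completeNormedModType R)
  (Ac Aci : {linear Xc -> Xc}) (Au Aui : {linear Xu -> Xu})
  (As : {linear Xs -> Xs})
  (g : Xc * Xu * Xs -> Xc * Xu * Xs)
  (Dg : nat -> Xc * Xu * Xs -> seq (Xc * Xu * Xs) -> Xc * Xu * Xs)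
  (kc : Xc -> Xc) (Dkc : nat -> Xc -> seq Xc -> Xc)
  (Lg Lc : R) :
  (2 <= n)%N ->
  (* bounded linear parts, A_c and A_u invertible with bounded inverses *)
  continuous (Ac : Xc -> Xc) -> continuous (Au : Xu -> Xu) ->
  continuous (As : Xs -> Xs) ->
  continuous (Aci : Xc -> Xc) -> continuous (Aui : Xu -> Xu) ->
  cancel Ac Aci -> cancel Aci Ac -> cancel Au Aui -> cancel Aui Au ->
  (forall m, (1 <= m <= n)%N ->
     opnorm (Aci : Xc -> Xc) ^+ m * opnorm (As : Xs -> Xs) < 1 /\
     opnorm (Aui : Xu -> Xu) * opnorm (Ac : Xc -> Xc) ^+ m < 1) ->
  0 <= Lg -> 0 <= Lc ->
  (* g in C^n_b(X,X), g(0)=0, Dg(0)=0, ||Dg||_0 <= Lg *)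
  Ckb_family n g Dg -> g 0 = 0 ->
  (forall h, Dg 1%N 0 [:: h] = 0) ->
  (forall y h, `|Dg 1%N y [:: h]| <= Lg * `|h|) ->
  (* k_c in C^n_b(X_c,X_c), k_c(0)=0, Dk_c(0)=0, ||Dk_c||_0 <= Lc *)
  Ckb_family n kc Dkc -> kc 0 = 0 ->
  (forall h, Dkc 1%N 0 [:: h] = 0) ->
  (forall y h, `|Dkc 1%N y [:: h]| <= Lc * `|h|) ->
  (* (S_n) *)
  cond_S n (opnorm (Ac : Xc -> Xc)) (opnorm (Aci : Xc -> Xc))
    (opnorm (Aui : Xu -> Xu)) (opnorm (As : Xs -> Xs)) Lg Lc ->
  let F : Xc * Xu * Xs -> Xc * Xu * Xs :=
    fun p => (Ac p.1.1, Au p.1.2, As p.2) + g p in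
  let sol (r : Xc -> Xc) (ku : Xc -> Xu) (ks : Xc -> Xs) : Prop :=
    [/\ bounded_continuous ku, bounded_continuous ks, bounded_continuous r,
        homeomorphism (fun x => Ac x + r x) &
        forall x : Xc, let y := Ac x + r x in
          F (x + kc x, ku x, ks x) = (y + kc y, ku y, ks y)] in
  exists r ku ks, sol r ku ks /\
    forall r' ku' ks', sol r' ku' ks' -> [/\ r' = r, ku' = ku & ks' = ks].
Proof.
(* The gap conditions and the normalisations at 0 only matter for the
   smoothness of the solution, not for its existence and uniqueness. *)
move=> n_ge2 cAc _ cAs cAci cAui AcK AciK AuK AuiK _ Lg_ge0 Lc_ge0 Cg _ _ Dg_le
  Ckc _ _ Dkc_le HS F sol.
have n_gt0 : (0 < n)%N by apply: leq_trans n_ge2.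
have [Mg g_le] := Ckb_bounded Cg.
have [Mk kc_le] := Ckb_bounded Ckc.
exact: (invariant_graph_exists_unique AcK AciK AuK AuiK
  (opnorm_ge0 cAc) (opnorm_ge0 cAci) (opnorm_ge0 cAui) (opnorm_ge0 cAs)
  (opnorm_le cAc) (opnorm_le cAci) (opnorm_le cAui) (opnorm_le cAs)
  Lg_ge0 Lc_ge0 (Ckb_lipschitz n_gt0 Lg_ge0 Cg Dg_le) g_le
  (Ckb_lipschitz n_gt0 Lc_ge0 Ckc Dkc_le) kc_le
  (cond_S_leq (ltnW n_ge2) HS)).
Qed.
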